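(* Let $(\mathcal{C},\psi)$ be a t-pair. Then for every $b\in\{i,d,a\}$, $\operatorname{typ}(\mathcal{U}^{bi}_{\mathcal{C}\psi})\preceq\operatorname{typ}(\mathcal{U}^{bd}_{\mathcal{C}\psi})\preceq\operatorname{typ}(\mathcal{U}^{ba}_{\mathcal{C}\psi})$ and $\operatorname{typ}(\mathcal{U}^{ab}_{\mathcal{C}\psi})\preceq\operatorname{typ}(\mathcal{U}^{db}_{\mathcal{C}\psi})\preceq\operatorname{typ}(\mathcal{U}^{ib}_{\mathcal{C}\psi})$.
   Context: Let $\mathbb{N}=\{0,1,2,\dots\}$; for an integer $k\ge 2$ let $E_k=\{0,1,\dots,k-1\}$; let $\mathcal{P}(\mathbb{N})$ be the set of nonempty finite subsets of $\mathbb{N}$. Let $F$ be a nonempty set (of attribute names). A decision table $T\in\mathcal{M}_k(F)$ is a rectangular table with $n\ge 1$ columns labeled with attributes $f_1,\dots,f_n\in F$ (any two columns labeled with the same attribute are equal), whose rows are pairwise different tuples from $E_k^n$ (the set of rows may be empty), each row being labeled with a set of decisions from $\mathcal{P}(\mathbb{N})$. Write $At(T)=\{f_1,\dots,f_n\}$ and $\Delta(T)$ for the set of rows. For a word $\alpha=(f_{i_1},\delta_1)\cdots(f_{i_m},\delta_m)$ with $f_{i_j}\in At(T)$, $\delta_j\in E_k$, the subtable $T\alpha$ consists of the rows of $T$ having value $\delta_j$ in column $f_{i_j}$ for all $j$ ($T\lambda=T$ for the empty word $\lambda$). Operations on tables: (1) removal of a column from a table with at least two columns (if groups of equal rows appear,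 only the first row of each group, with its decision set, is kept); (2) changing of decisions: the decision sets attached to rows are replaced arbitrarily by sets from $\mathcal{P}(\mathbb{N})$; (3) permutation of columns: swap two columns together with their attribute labels; (4) duplication of columns: add a copy of a column (with its label) next to it. A set $\mathcal{C}\subseteq\mathcal{M}_k(F)$ is a closed class if every table obtained from a table of $\mathcal{C}$ by finitely many such operations belongs to $\mathcal{C}$. A decision tree over $\mathcal{M}_k(F)$ is a finite directed tree with a root (unique node with no entering edge) and at least two nodes such that the root and the edges leaving the root are unlabeled, each worker node (neither root nor terminal) is labeled with an attribute from $F$, each edge leaving a worker node is labeled with a number from $E_k$, and each terminal node is labeled with a number from $\mathbb{N}$. For a complete path $\xi$ (root to terminal node) whose worker nodes are labeled $f_{j_1},\dots,f_{j_m}$ in order, with the edges leaving them labeled $\delta_1,\dots,\delta_m$, put $\pi(\xi)=(f_{j_1},\delta_1)\cdots(f_{j_m},\delta_m)$, $\varphi(\xi)=f_{j_1}\cdots f_{j_m}$ (both empty if $m=0$), and let $\tau(\xi)$ be the label of its terminal node. A nondeterministic decision tree for $T$ is a decision tree $\Gamma$ whose worker-node attributes lie in $At(T)$, such that $\bigcup_{\xi}\Delta(T\pi(\xi))=\Delta(T)$ (union over complete paths), and for every row $r\in\Delta(T)$ and every complete path $\xi$ with $r\in\Delta(T\pi(\xi))$, $\tau(\xi)$ belongs to the decision set of $r$. A decision tree is deterministic if exactly one edge leaves the root and the edges leaving each worker node have pairwise different labels; a deterministic decision tree for $T$ is a deterministic decision tree that is a nondeterministic decision tree for $T$. A complexity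 measure over $\mathcal{M}_k(F)$ is any map $\psi:F^*\to\mathbb{N}$, where $F^*$ is the set of finite words over $F$ including the empty word $\lambda$. For a tree, $\psi(\Gamma)=\max_\xi\psi(\varphi(\xi))$ over complete paths. For $T$ with columns labeled $f_1,\dots,f_n$: $\psi^i(T)=\psi(f_1\cdots f_n)$, $\psi^d(T)$ is the minimum complexity of a deterministic decision tree for $T$, $\psi^a(T)$ the minimum complexity of a nondeterministic decision tree for $T$. A t-pair $(\mathcal{C},\psi)$ consists of a closed class $\mathcal{C}\subseteq\mathcal{M}_k(F)$ and a complexity measure $\psi$ over $\mathcal{M}_k(F)$. For $b,c\in\{i,d,a\}$ define the partial function $\mathcal{U}^{bc}_{\mathcal{C}\psi}(n)=\max\{\psi^b(T):T\in\mathcal{C},\psi^c(T)\le n\}$ (defined iff this set is nonempty and finite). For a partial function $g:\mathbb{N}\to\mathbb{N}$ with domain $\mathrm{Dom}(g)$, let $\mathrm{Dom}^+(g)=\{n\in\mathrm{Dom}(g):g(n)\ge n\}$, $\mathrm{Dom}^-(g)=\{n\in\mathrm{Dom}(g):g(n)\le n\}$. Its type $\operatorname{typ}(g)$ is: $\alpha$ if $\mathrm{Dom}(g)$ is infinite and $g$ is bounded above; $\beta$ if $\mathrm{Dom}(g)$ is infinite, $\mathrm{Dom}^+(g)$ is finite and $g$ is unbounded above; $\gamma$ if $\mathrm{Dom}^+(g)$ and $\mathrm{Dom}^-(g)$ are both infinite; $\delta$ if $\mathrm{Dom}(g)$ is infinite and $\mathrm{Dom}^-(g)$ is finite; $\epsilon$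 if $\mathrm{Dom}(g)$ is finite. $\preceq$ is the linear order $\alpha\preceq\beta\preceq\gamma\preceq\delta\preceq\epsilon$. *)

From Stdlib Require Import List Arith.
Import ListNotations.

(* A table: column labels (attributes) and an ORDERED list of rows;    *)
(* each row is a tuple (list nat) together with its decision set,      *)
(* a nonempty finite subset of nat represented by a nonempty list      *)
(* (membership = In).                                                  *)

Record table (F : Type) := mkTable {
  cols : list F;
  rows : list (list nat * list nat)
}.
Arguments mkTable {F} _ _.
Arguments cols {F} _.
Arguments rows {F} _.

Definition wf_table {F : Type} (k : nat) (T : table F) : Prop :=
  1 <= length (cols T) /\
  (forall r d, In (r, d) (rows T) ->
     length r = length (cols T) /\ (forall x, In x r -> x < k) /\ d <> []) /\
  NoDup (map fst (rows T)) /\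
  (forall i j (f : F), nth_error (cols T) i = Some f -> nth_error (cols T) j = Some f ->
     forall r d, In (r, d) (rows T) -> nth_error r i = nth_error r j).

Fixpoint remove_nth {A : Type} (i : nat) (l : list A) : list A :=
  match l, i with
  | [], _ => []
  | _ :: l', 0 => l'
  | x :: l', S i' => x :: remove_nth i' l'
  end.

Fixpoint replace_nth {A : Type} (i : nat) (y : A) (l : list A) : list A :=
  match l, i with
  | [], _ => []
  | _ :: l', 0 => y :: l'
  | x :: l', S i' => x :: replace_nth i' y l'
  end.

Definition swap_list {A : Type} (i j : nat) (l : list A) : list A :=
  match nth_error l i, nth_error l j with
  | Some a, Some b => replace_nth i b (replace_nth j a l)
  | _, _ => l
  end.

(* insert a copy of entry i right after it *)
Definition dup_list {A : Type} (i : nat) (l : list A) : list A :=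
  firstn (S i) l ++ skipn i l.

Fixpoint dedup_first (seen : list (list nat)) (rs : list (list nat * list nat))
  : list (list nat * list nat) :=
  match rs with
  | [] => []
  | (r, d) :: rs' =>
      if in_dec (list_eq_dec Nat.eq_dec) r seen then dedup_first seen rs'
      else (r, d) :: dedup_first (r :: seen) rs'
  end.

Inductive table_op {F : Type} : table F -> table F -> Prop :=
  | op_remove : forall T i,
      2 <= length (cols T) -> i < length (cols T) ->
      table_op T (mkTable (remove_nth i (cols T))
                    (dedup_first [] (map (fun rd => (remove_nth i (fst rd), snd rd)) (rows T))))
  | op_change : forall T rs',
      map fst rs' = map fst (rows T) ->
      (forall r d, In (r, d) rs' -> d <> []) ->
      table_op T (mkTable (cols T) rs')
  | op_swap : forall T i j,
      i < length (cols T) -> j < length (cols T) ->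
      table_op T (mkTable (swap_list i j (cols T))
                    (map (fun rd => (swap_list i j (fst rd), snd rd)) (rows T)))
  | op_dup : forall T i,
      i < length (cols T) ->
      table_op T (mkTable (dup_list i (cols T))
                    (map (fun rd => (dup_list i (fst rd), snd rd)) (rows T))).

Inductive obtained {F : Type} : table F -> table F -> Prop :=
  | obt_refl : forall T, obtained T T
  | obt_step : forall T T' T'', table_op T T' -> obtained T' T'' -> obtained T T''.

Definition closed_class {F : Type} (k : nat) (C : table F -> Prop) : Prop :=
  (forall T, C T -> wf_table k T) /\
  (forall T T', C T -> obtained T T' -> C T').

(* subtable: row tuple r lies in T alpha *)
Definition row_matches {F : Type} (cs : list F) (r : list nat) (alpha : list (F * nat)) : Prop :=
  forall f delta, In (f, delta) alpha ->
    forall j, nth_error cs j = Some f -> nth_error r j = Some delta.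

(* A node is a terminal (labeled by nat) or a worker node labeled by   *)
(* an attribute with a list of (edge label, child) pairs.  A decision  *)
(* tree is the (nonempty) list of children of the unlabeled root.      *)

Inductive dnode (F : Type) : Type :=
  | Term : nat -> dnode F
  | Work : F -> list (nat * dnode F) -> dnode F.
Arguments Term {F} _.
Arguments Work {F} _ _.

Definition dtree (F : Type) := list (dnode F).

Fixpoint node_wf {F : Type} (k : nat) (t : dnode F) : Prop :=
  match t with
  | Term _ => True
  | Work _ ch =>
      ch <> [] /\
      (fix go (l : list (nat * dnode F)) : Prop :=
         match l with
         | [] => True
         | (delta, c) :: l' => delta < k /\ node_wf k c /\ go l'
         end) ch
  end.

Fixpoint node_det {F : Type} (t : dnode F) : Prop :=
  match t with
  | Term _ => True
  | Work _ ch =>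
      NoDup (map fst ch) /\
      (fix go (l : list (nat * dnode F)) : Prop :=
         match l with
         | [] => True
         | (_, c) :: l' => node_det c /\ go l'
         end) ch
  end.

Fixpoint node_attrs_in {F : Type} (P : F -> Prop) (t : dnode F) : Prop :=
  match t with
  | Term _ => True
  | Work f ch =>
      P f /\
      (fix go (l : list (nat * dnode F)) : Prop :=
         match l with
         | [] => True
         | (_, c) :: l' => node_attrs_in P c /\ go l'
         end) ch
  end.

Fixpoint node_paths {F : Type} (t : dnode F) : list (list (F * nat) * nat) :=
  match t with
  | Term d => [([], d)]
  | Work f ch =>
      (fix go (l : list (nat * dnode F)) : list (list (F * nat) * nat) :=
         match l with
         | [] => []
         | (delta, c) :: l' =>
             map (fun p => ((f, delta) :: fst p, snd p)) (node_paths c) ++ go l'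
         end) ch
  end.

Definition tree_paths {F : Type} (G : dtree F) : list (list (F * nat) * nat) :=
  flat_map node_paths G.

Definition is_dtree {F : Type} (k : nat) (G : dtree F) : Prop :=
  G <> [] /\ Forall (node_wf k) G.

Definition is_det {F : Type} (G : dtree F) : Prop :=
  length G = 1 /\ Forall node_det G.

Definition nondet_tree_for {F : Type} (k : nat) (T : table F) (G : dtree F) : Prop :=
  is_dtree k G /\
  Forall (node_attrs_in (fun f => In f (cols T))) G /\
  (forall r d, In (r, d) (rows T) ->
     exists p, In p (tree_paths G) /\ row_matches (cols T) r (fst p)) /\
  (forall r d, In (r, d) (rows T) -> forall p, In p (tree_paths G) ->
     row_matches (cols T) r (fst p) -> In (snd p) d).

Definition det_tree_for {F : Type} (k : nat) (T : table F) (G : dtree F) : Prop :=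
  is_det G /\ nondet_tree_for k T G.

Definition tree_cx {F : Type} (psi : list F -> nat) (G : dtree F) : nat :=
  fold_right Nat.max 0 (map (fun p => psi (map fst (fst p))) (tree_paths G)).

Definition is_min (P : nat -> Prop) (m : nat) : Prop := P m /\ forall v, P v -> m <= v.
Definition is_max (P : nat -> Prop) (m : nat) : Prop := P m /\ forall v, P v -> v <= m.

Inductive mode := Mi | Md | Ma.

Definition psi_val {F : Type} (k : nat) (psi : list F -> nat) (b : mode) (T : table F) (m : nat)
  : Prop :=
  match b with
  | Mi => m = psi (cols T)
  | Md => is_min (fun v => exists G, det_tree_for k T G /\ tree_cx psi G = v) m
  | Ma => is_min (fun v => exists G, nondet_tree_for k T G /\ tree_cx psi G = v) m
  end.

(* graph of the partial function U^{bc}_{C psi}: U n v <-> U(n) is defined and = v *)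
Definition Ufun {F : Type} (k : nat) (C : table F -> Prop) (psi : list F -> nat) (b c : mode)
  : nat -> nat -> Prop :=
  fun n v => is_max (fun m => exists T, C T /\ psi_val k psi b T m /\
                                  exists m', psi_val k psi c T m' /\ m' <= n) v.

Definition finite_nat (P : nat -> Prop) : Prop := exists N, forall n, P n -> n < N.
Definition infinite_nat (P : nat -> Prop) : Prop := ~ finite_nat P.

Definition Dom (g : nat -> nat -> Prop) : nat -> Prop := fun n => exists v, g n v.
Definition DomP (g : nat -> nat -> Prop) : nat -> Prop := fun n => exists v, g n v /\ n <= v.
Definition DomM (g : nat -> nat -> Prop) : nat -> Prop := fun n => exists v, g n v /\ v <= n.
Definition bounded_above (g : nat -> nat -> Prop) : Prop :=
  exists B, forall n v, g n v -> v <= B.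

Inductive ftype := Talpha | Tbeta | Tgamma | Tdelta | Teps.

Definition has_type (g : nat -> nat -> Prop) (t : ftype) : Prop :=
  match t with
  | Talpha => infinite_nat (Dom g) /\ bounded_above g
  | Tbeta => infinite_nat (Dom g) /\ finite_nat (DomP g) /\ ~ bounded_above g
  | Tgamma => infinite_nat (DomP g) /\ infinite_nat (DomM g)
  | Tdelta => infinite_nat (Dom g) /\ finite_nat (DomM g)
  | Teps => finite_nat (Dom g)
  end.

Definition ftype_rank (t : ftype) : nat :=
  match t with Talpha => 0 | Tbeta => 1 | Tgamma => 2 | Tdelta => 3 | Teps => 4 end.

Definition ftype_le (t1 t2 : ftype) : Prop := ftype_rank t1 <= ftype_rank t2.

Definition typ_le (g1 g2 : nat -> nat -> Prop) : Prop :=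
  forall t1 t2, has_type g1 t1 -> has_type g2 t2 -> ftype_le t1 t2.

From Stdlib Require Import List Arith Lia Classical.
Import ListNotations.

(* Every well-formed table has a deterministic decision tree that queries all
   of its columns in order, with one edge per value in E_k; its complexity is
   at most psi^i(T).  Hence psi^a <= psi^d <= psi^i on every table, so for
   b <= b' and c' <= c (in the order a < d < i) every element of the set whose
   maximum is U^{bc}(n) is dominated by an element of the set for U^{b'c'}(n).
   As U^{bc} is nondecreasing in n, it is eventually below U^{b'c'} whenever
   the latter has infinite domain, and such a function cannot have a larger
   type: a type beyond alpha forces unboundedness, one beyond beta infinitely
   many n with g(n) >= n, and delta only finitely many n with g(n) <= n; the
   first two properties pass from the smaller function to the larger one and
   the failure of the third passes back. *)

Lemma NoDup_map_fst_in {A B} (l : list (A * B)) a b b' :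
  NoDup (map fst l) -> In (a, b) l -> In (a, b') l -> b = b'.
Proof.
  induction l as [|x l IH]; simpl; [tauto|].
  intros Hn. inversion Hn as [|y l' Hni Hnd]; subst. intros [H1|H1] [H2|H2]; subst.
  - inversion H2; auto.
  - exfalso. apply Hni. apply in_map_iff. exists (a, b'). auto.
  - exfalso. apply Hni. apply in_map_iff. exists (a, b). auto.
  - auto.
Qed.

Lemma in_combine_nth_error {A B} (l1 : list A) (l2 : list B) a b :
  In (a, b) (combine l1 l2) -> exists i, nth_error l1 i = Some a /\ nth_error l2 i = Some b.
Proof.
  revert l2; induction l1 as [|x l1 IH]; intros [|y l2]; simpl; try tauto.
  intros [H|H].
  - inversion H; subst. exists 0. auto.
  - destruct (IH _ H) as [i Hi]. exists (S i). auto.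
Qed.

Lemma nth_error_in_combine {A B} (l1 : list A) (l2 : list B) a b i :
  nth_error l1 i = Some a -> nth_error l2 i = Some b -> In (a, b) (combine l1 l2).
Proof.
  revert l2 i; induction l1 as [|x l1 IH]; intros [|y l2] [|i]; simpl; try discriminate.
  - intros H1 H2. inversion H1; inversion H2; subst. auto.
  - intros. right. eauto.
Qed.

Lemma map_fst_combine {A B} (l1 : list A) (l2 : list B) :
  length l1 = length l2 -> map fst (combine l1 l2) = l1.
Proof.
  revert l2; induction l1 as [|x l1 IH]; intros [|y l2]; simpl; try discriminate; auto.
  intros H. f_equal. auto.
Qed.

Section ExhaustiveTree.
Context {F : Type}.

Lemma node_paths_Work (f : F) ch :
  node_paths (Work f ch) =
  flat_map (fun dc => map (fun p => ((f, fst dc) :: fst p, snd p)) (node_paths (snd dc))) ch.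
Proof.
  induction ch as [|[d c] ch IH]; [reflexivity|].
  simpl in *. rewrite IH. reflexivity.
Qed.

Lemma node_wf_Work k (f : F) ch :
  ch <> [] -> Forall (fun dc => fst dc < k /\ node_wf k (snd dc)) ch -> node_wf k (Work f ch).
Proof.
  intros Hne Hch. split; [exact Hne|]. clear Hne.
  induction Hch as [|[d c] ch [Hd Hc] _ IH]; [exact I|]. exact (conj Hd (conj Hc IH)).
Qed.

Lemma node_det_Work (f : F) ch :
  NoDup (map fst ch) -> Forall (fun dc => node_det (snd dc)) ch -> node_det (Work f ch).
Proof.
  intros Hn Hch. split; [exact Hn|]. clear Hn.
  induction Hch as [|[d c] ch Hc _ IH]; [exact I|]. exact (conj Hc IH).
Qed.

Lemma node_attrs_in_Work (P : F -> Prop) f ch :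
  P f -> Forall (fun dc => node_attrs_in P (snd dc)) ch -> node_attrs_in P (Work f ch).
Proof.
  intros Hp Hch. split; [exact Hp|]. clear Hp.
  induction Hch as [|[d c] ch Hc _ IH]; [exact I|]. exact (conj Hc IH).
Qed.

(* Junk value 0 when no row of [T] equals [r]. *)
Definition row_decision (T : table F) (r : list nat) : nat :=
  match find (fun rd => if list_eq_dec Nat.eq_dec (fst rd) r then true else false) (rows T) with
  | Some rd => hd 0 (snd rd)
  | None => 0
  end.

Lemma row_decision_correct k (T : table F) r d :
  wf_table k T -> In (r, d) (rows T) -> In (row_decision T r) d.
Proof.
  intros [_ [Hr [Hn _]]] Hin. unfold row_decision.
  destruct (find _ _) as [[r' d']|] eqn:E.
  - apply find_some in E. destruct E as [Hin' He]. simpl in He.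
    destruct (list_eq_dec Nat.eq_dec r' r); [subst|discriminate].
    simpl. rewrite (NoDup_map_fst_in _ _ _ _ Hn Hin' Hin).
    destruct (Hr _ _ Hin) as [_ [_ Hd]]. destruct d; [congruence|]. simpl; auto.
  - exfalso. pose proof (find_none _ _ E _ Hin) as Hr'. simpl in Hr'.
    destruct (list_eq_dec Nat.eq_dec r r); congruence.
Qed.

Fixpoint exhaustive_node (k : nat) (T : table F) (cs : list F) (pre : list nat) : dnode F :=
  match cs with
  | [] => Term (row_decision T pre)
  | f :: cs' => Work f (map (fun d => (d, exhaustive_node k T cs' (pre ++ [d]))) (seq 0 k))
  end.

Lemma exhaustive_node_paths k T cs : forall pre p,
  In p (node_paths (exhaustive_node k T cs pre)) <->
  exists ds, length ds = length cs /\ Forall (fun x => x < k) ds /\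
             p = (combine cs ds, row_decision T (pre ++ ds)).
Proof.
  induction cs as [|f cs IH]; intros pre p; cbn [exhaustive_node length].
  - split.
    + intros [H|[]]. exists []. simpl. rewrite app_nil_r. auto.
    + intros [ds [Hl [_ Hp]]]. destruct ds; [|discriminate]. left. rewrite app_nil_r in Hp. auto.
  - rewrite node_paths_Work, in_flat_map. split.
    + intros [x [Hx Hp]]. apply in_map_iff in Hx. destruct Hx as [d [<- Hd]].
      apply in_seq in Hd. simpl in Hp. apply in_map_iff in Hp. destruct Hp as [q [<- Hq]].
      apply IH in Hq. destruct Hq as [ds [Hl [Hf ->]]].
      exists (d :: ds). simpl. rewrite <- app_assoc. simpl. repeat split; auto.
      constructor; auto. lia.
    + intros [ds [Hl [Hf ->]]]. destruct ds as [|d ds]; [discriminate|].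
      inversion Hf; subst. simpl in Hl.
      exists (d, exhaustive_node k T cs (pre ++ [d])). split.
      * apply in_map_iff. exists d. split; auto. apply in_seq. lia.
      * simpl. apply in_map_iff. exists (combine cs ds, row_decision T (pre ++ d :: ds)).
        split; [reflexivity|]. apply IH. exists ds. rewrite <- app_assoc. simpl. auto.
Qed.

Lemma exhaustive_node_wf k T cs pre : 1 <= k -> node_wf k (exhaustive_node k T cs pre).
Proof.
  intros Hk. revert pre; induction cs as [|f cs IH]; intros pre; cbn [exhaustive_node]; [exact I|].
  apply node_wf_Work.
  - destruct k; [lia|]. discriminate.
  - apply Forall_forall. intros x Hx. apply in_map_iff in Hx. destruct Hx as [d [<- Hd]].
    apply in_seq in Hd. simpl. split; [lia|auto].
Qed.

Lemma exhaustive_node_det k T cs pre : node_det (exhaustive_node k T cs pre).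
Proof.
  revert pre; induction cs as [|f cs IH]; intros pre; cbn [exhaustive_node]; [exact I|].
  apply node_det_Work.
  - rewrite map_map, map_id. apply seq_NoDup.
  - apply Forall_forall. intros x Hx. apply in_map_iff in Hx. destruct Hx as [d [<- _]]. apply IH.
Qed.

Lemma exhaustive_node_attrs k T cs0 cs pre :
  incl cs cs0 -> node_attrs_in (fun f => In f cs0) (exhaustive_node k T cs pre).
Proof.
  revert pre; induction cs as [|f cs IH]; intros pre Hi; cbn [exhaustive_node]; [exact I|].
  apply node_attrs_in_Work.
  - apply Hi. left; auto.
  - apply Forall_forall. intros x Hx. apply in_map_iff in Hx. destruct Hx as [d [<- _]].
    apply IH. intros y Hy. apply Hi. right; auto.
Qed.

Definition exhaustive_tree (k : nat) (T : table F) : dtree F := [exhaustive_node k T (cols T) []].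

Lemma exhaustive_tree_paths k T p :
  In p (tree_paths (exhaustive_tree k T)) <->
  exists ds, length ds = length (cols T) /\ Forall (fun x => x < k) ds /\
             p = (combine (cols T) ds, row_decision T ds).
Proof.
  unfold tree_paths, exhaustive_tree. simpl. rewrite app_nil_r. apply exhaustive_node_paths.
Qed.

(* Columns with equal labels are equal, so a row agrees with its own path. *)
Lemma row_matches_own_path k (T : table F) r d :
  wf_table k T -> In (r, d) (rows T) -> row_matches (cols T) r (combine (cols T) r).
Proof.
  intros [_ [_ [_ Heq]]] Hin f delta Hfd j Hj.
  destruct (in_combine_nth_error _ _ _ _ Hfd) as [i [Hi1 Hi2]].
  rewrite <- Hi2. symmetry. eapply Heq; eauto.
Qed.

Lemma row_matches_combine_eq (cs : list F) r ds :
  length r = length cs -> length ds = length cs -> row_matches cs r (combine cs ds) -> r = ds.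
Proof.
  intros Hr Hds Hm. apply nth_error_ext. intros i.
  destruct (nth_error ds i) as [x|] eqn:E.
  - assert (Hi : i < length cs) by (rewrite <- Hds; apply nth_error_Some; congruence).
    destruct (nth_error cs i) as [f|] eqn:E2.
    + apply (Hm f x); auto. eapply nth_error_in_combine; eauto.
    + apply nth_error_None in E2. lia.
  - apply nth_error_None in E. apply nth_error_None. lia.
Qed.

Lemma exhaustive_tree_for k T :
  1 <= k -> wf_table k T -> det_tree_for k T (exhaustive_tree k T).
Proof.
  intros Hk Hwf. pose proof Hwf as [_ [Hr _]].
  split; [split; [reflexivity|repeat constructor; apply exhaustive_node_det]|].
  split; [split; [discriminate|repeat constructor; apply exhaustive_node_wf; exact Hk]|].
  split; [repeat constructor; apply exhaustive_node_attrs; intros x; auto|].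
  split.
  - intros r d Hin. exists (combine (cols T) r, row_decision T r). split.
    + apply exhaustive_tree_paths. exists r. destruct (Hr _ _ Hin) as [Hl [Hlt _]].
      repeat split; auto. apply Forall_forall; auto.
    + eapply row_matches_own_path; eauto.
  - intros r d Hin p Hp Hm. apply exhaustive_tree_paths in Hp. destruct Hp as [ds [Hl [_ ->]]].
    simpl in *. destruct (Hr _ _ Hin) as [Hlr _].
    rewrite <- (row_matches_combine_eq _ _ _ Hlr Hl Hm). eapply row_decision_correct; eauto.
Qed.

Lemma exhaustive_tree_cx k (psi : list F -> nat) T :
  tree_cx psi (exhaustive_tree k T) <= psi (cols T).
Proof.
  apply list_max_le, Forall_forall. intros x Hx.
  apply in_map_iff in Hx. destruct Hx as [p [<- Hp]]. apply exhaustive_tree_paths in Hp.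
  destruct Hp as [ds [Hl [_ ->]]]. simpl. rewrite map_fst_combine; auto.
Qed.

End ExhaustiveTree.

Lemma is_min_exists (P : nat -> Prop) x : P x -> exists m, is_min P m.
Proof.
  induction x as [x IH] using lt_wf_ind. intros Hx.
  destruct (classic (exists y, y < x /\ P y)) as [[y [Hy Py]]|Hn].
  - exact (IH y Hy Py).
  - exists x. split; auto. intros v Hv. destruct (le_lt_dec x v); auto.
    exfalso; eauto.
Qed.

Lemma is_max_exists (P : nat -> Prop) B :
  (exists x, P x) -> (forall x, P x -> x <= B) -> exists m, is_max P m.
Proof.
  induction B as [|B IH]; intros [x Hx] Hb.
  - exists 0. assert (x = 0) by (specialize (Hb x Hx); lia). subst. split; auto.
  - destruct (classic (P (S B))) as [H|H].
    + exists (S B). split; auto.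
    + apply IH; eauto. intros y Hy. specialize (Hb y Hy).
      destruct (Nat.eq_dec y (S B)); [subst; contradiction|lia].
Qed.

Section Complexities.
Context {F : Type} (k : nat) (Hk : 1 <= k) (psi : list F -> nat).

Definition mode_rank (b : mode) : nat := match b with Ma => 0 | Md => 1 | Mi => 2 end.

Lemma psi_val_exists b T : wf_table k T -> exists m, psi_val k psi b T m.
Proof.
  intros Hwf. pose proof (exhaustive_tree_for k T Hk Hwf) as HG.
  destruct b; simpl.
  - eauto.
  - eapply is_min_exists. exists (exhaustive_tree k T). split; eauto.
  - eapply is_min_exists. exists (exhaustive_tree k T). split; [exact (proj2 HG)|eauto].
Qed.

Lemma psi_val_unique b T m m' : psi_val k psi b T m -> psi_val k psi b T m' -> m = m'.
Proof.
  destruct b; simpl; [congruence| |];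
    intros [Hm Hmin] [Hm' Hmin']; apply Nat.le_antisymm; auto.
Qed.

Lemma psi_d_le_i T m : wf_table k T -> psi_val k psi Md T m -> m <= psi (cols T).
Proof.
  intros Hwf [_ Hmin]. eapply Nat.le_trans; [|apply (exhaustive_tree_cx k psi T)].
  apply Hmin. exists (exhaustive_tree k T). split; auto. apply exhaustive_tree_for; auto.
Qed.

Lemma psi_a_le_d T x y : psi_val k psi Ma T x -> psi_val k psi Md T y -> x <= y.
Proof.
  intros [_ Hx] [[G [HG <-]] _]. apply Hx. exists G. split; auto. exact (proj2 HG).
Qed.

Lemma psi_val_le b1 b2 T x y : mode_rank b1 <= mode_rank b2 -> wf_table k T ->
  psi_val k psi b1 T x -> psi_val k psi b2 T y -> x <= y.
Proof.
  intros Hb Hwf Hx Hy.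
  destruct (psi_val_exists Md T Hwf) as [z Hz].
  destruct b1, b2; simpl in Hb; try lia;
    try (rewrite (psi_val_unique _ _ _ _ Hx Hy); lia).
  - simpl in Hy. subst. eapply psi_d_le_i; eauto.
  - simpl in Hy. subst.
    pose proof (psi_a_le_d _ _ _ Hx Hz). pose proof (psi_d_le_i _ _ Hwf Hz). lia.
  - eapply psi_a_le_d; eauto.
Qed.

End Complexities.

Lemma infinite_nat_ge (P : nat -> Prop) : infinite_nat P -> forall N, exists n, N <= n /\ P n.
Proof.
  intros H N. apply NNPP. intros Hn. apply H. exists N. intros n Pn.
  destruct (le_lt_dec N n); auto. exfalso; eauto.
Qed.

Lemma infinite_nat_of_ge (P : nat -> Prop) : (forall N, exists n, N <= n /\ P n) -> infinite_nat P.
Proof. intros H [M HM]. destruct (H M) as [n [Hn Pn]]. specialize (HM n Pn). lia. Qed.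

Lemma infinite_nat_split (P Q R : nat -> Prop) :
  infinite_nat P -> (forall n, P n -> Q n \/ R n) -> finite_nat Q -> infinite_nat R.
Proof.
  intros HP HPQR [M HM] [M' HM']. apply HP. exists (max M M'). intros n Pn.
  destruct (HPQR n Pn) as [Hq|Hr]; [specialize (HM n Hq)|specialize (HM' n Hr)]; lia.
Qed.

Section TypeRanks.
Variable g : nat -> nat -> Prop.

Lemma Dom_split_DomP_DomM n : Dom g n -> DomP g n \/ DomM g n.
Proof. intros [v Hv]. destruct (le_ge_dec n v); [left|right]; exists v; auto. Qed.

Lemma has_type_Dom_infinite t : has_type g t -> t <> Teps -> infinite_nat (Dom g).
Proof.
  intros Ht Hne. destruct t; simpl in Ht; try tauto.
  intros [M HM]. apply (proj1 Ht). exists M. intros n [v [Hv _]]. apply HM. exists v; auto.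
Qed.

Lemma has_type_bounded t : has_type g t -> ftype_rank t = 0 -> bounded_above g.
Proof. intros Ht Hr. destruct t; simpl in Ht, Hr; tauto || lia. Qed.

Lemma has_type_DomP_finite t : has_type g t -> ftype_rank t <= 1 -> finite_nat (DomP g).
Proof.
  intros Ht Hr. destruct t; simpl in Ht, Hr; try lia; [|tauto].
  destruct Ht as [_ [B HB]]. exists (S B). intros n [v [Hv Hnv]]. specialize (HB n v Hv). lia.
Qed.

Lemma has_type_DomM_finite t : has_type g t -> ftype_rank t = 3 -> finite_nat (DomM g).
Proof. intros Ht Hr. destruct t; simpl in Ht, Hr; tauto || lia. Qed.

Lemma has_type_DomM_infinite t : has_type g t -> ftype_rank t <= 2 -> infinite_nat (DomM g).
Proof.
  intros Ht Hr. destruct (Nat.eq_dec (ftype_rank t) 2) as [E|E].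
  - destruct t; simpl in E; try discriminate. exact (proj2 Ht).
  - apply (infinite_nat_split (Dom g) (DomP g)).
    + apply (has_type_Dom_infinite t Ht). intros ->. simpl in Hr. lia.
    + exact Dom_split_DomP_DomM.
    + apply (has_type_DomP_finite t Ht). lia.
Qed.

Lemma has_type_DomP_infinite t : has_type g t -> 2 <= ftype_rank t <= 3 -> infinite_nat (DomP g).
Proof.
  intros Ht Hr. destruct (Nat.eq_dec (ftype_rank t) 2) as [E|E].
  - destruct t; simpl in E; try discriminate. exact (proj1 Ht).
  - apply (infinite_nat_split (Dom g) (DomM g)).
    + apply (has_type_Dom_infinite t Ht). intros ->. simpl in Hr. lia.
    + intros n Hn. apply or_comm, Dom_split_DomP_DomM, Hn.
    + apply (has_type_DomM_finite t Ht). lia.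
Qed.

Lemma has_type_unbounded t : has_type g t -> 1 <= ftype_rank t <= 3 -> ~ bounded_above g.
Proof.
  intros Ht Hr [B HB]. destruct (Nat.eq_dec (ftype_rank t) 1) as [E|E].
  - destruct t; simpl in E; try discriminate. exact (proj2 (proj2 Ht) (ex_intro _ B HB)).
  - destruct (infinite_nat_ge _ (has_type_DomP_infinite t Ht ltac:(lia)) (S B))
      as [n [Hn [v [Hv Hnv]]]].
    specialize (HB n v Hv). lia.
Qed.

End TypeRanks.

Definition monotone_graph (g : nat -> nat -> Prop) : Prop :=
  forall n m v w, g n v -> g m w -> n <= m -> v <= w.

Definition eventually_below (g1 g2 : nat -> nat -> Prop) : Prop :=
  exists N, forall n, N <= n ->
    (exists v, g1 n v) /\ (exists w, g2 n w) /\ (forall v w, g1 n v -> g2 n w -> v <= w).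

Section EventuallyBelow.
Variables g1 g2 : nat -> nat -> Prop.
Hypothesis Hbelow : eventually_below g1 g2.

Lemma eventually_below_Dom_infinite : infinite_nat (Dom g1).
Proof.
  destruct Hbelow as [N HN]. apply infinite_nat_of_ge. intros M.
  exists (max N M). split; [lia|]. apply (HN (max N M)). lia.
Qed.

Lemma eventually_below_bounded : monotone_graph g1 -> bounded_above g2 -> bounded_above g1.
Proof.
  intros Hmono [B HB]. destruct Hbelow as [N HN]. exists B. intros n v Hv.
  destruct (HN (max n N) ltac:(lia)) as [[v' Hv'] [[w Hw] Hle]].
  specialize (Hmono _ _ _ _ Hv Hv' ltac:(lia)). specialize (Hle _ _ Hv' Hw).
  specialize (HB _ _ Hw). lia.
Qed.

Lemma eventually_below_DomP_infinite : infinite_nat (DomP g1) -> infinite_nat (DomP g2).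
Proof.
  intros Hinf. destruct Hbelow as [N HN]. apply infinite_nat_of_ge. intros M.
  destruct (infinite_nat_ge _ Hinf (max N M)) as [n [Hn [v [Hv Hnv]]]].
  destruct (HN n ltac:(lia)) as [_ [[w Hw] Hle]]. specialize (Hle _ _ Hv Hw).
  exists n. split; [lia|]. exists w. split; [assumption|lia].
Qed.

Lemma eventually_below_DomM_infinite : infinite_nat (DomM g2) -> infinite_nat (DomM g1).
Proof.
  intros Hinf. destruct Hbelow as [N HN]. apply infinite_nat_of_ge. intros M.
  destruct (infinite_nat_ge _ Hinf (max N M)) as [n [Hn [w [Hw Hwn]]]].
  destruct (HN n ltac:(lia)) as [[v Hv] [_ Hle]]. specialize (Hle _ _ Hv Hw).
  exists n. split; [lia|]. exists v. split; [assumption|lia].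
Qed.

End EventuallyBelow.

Lemma typ_le_of_eventually_below (g1 g2 : nat -> nat -> Prop) :
  monotone_graph g1 -> (infinite_nat (Dom g2) -> eventually_below g1 g2) -> typ_le g1 g2.
Proof.
  intros Hmono Hbelow t1 t2 H1 H2. unfold ftype_le.
  destruct (classic (t2 = Teps)) as [->|Ht2]; [destruct t1; simpl; lia|].
  assert (Hb : eventually_below g1 g2) by exact (Hbelow (has_type_Dom_infinite g2 t2 H2 Ht2)).
  assert (Hr1 : ftype_rank t1 <= 3).
  { destruct t1; simpl; try lia. exfalso. exact (eventually_below_Dom_infinite _ _ Hb H1). }
  assert (Hr2 : ftype_rank t2 <= 3) by (destruct t2; simpl; congruence || lia).
  apply Nat.nlt_ge. intros Hlt.
  destruct (Nat.lt_trichotomy (ftype_rank t2) 1) as [H0|[H1'|H2']].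
  - apply (has_type_unbounded g1 t1 H1); [lia|].
    apply (eventually_below_bounded _ _ Hb Hmono), (has_type_bounded g2 t2 H2). lia.
  - apply (eventually_below_DomP_infinite _ _ Hb (has_type_DomP_infinite g1 t1 H1 ltac:(lia))).
    apply (has_type_DomP_finite g2 t2 H2). lia.
  - apply (eventually_below_DomM_infinite _ _ Hb (has_type_DomM_infinite g2 t2 H2 ltac:(lia))).
    apply (has_type_DomM_finite g1 t1 H1). lia.
Qed.

Definition sup_graph (S : nat -> nat -> Prop) : nat -> nat -> Prop := fun n => is_max (S n).

Definition increasing_family (S : nat -> nat -> Prop) : Prop :=
  forall n m x, n <= m -> S n x -> S m x.

Section SupGraph.
Variables S1 S2 : nat -> nat -> Prop.

Lemma sup_graph_monotone : increasing_family S1 -> monotone_graph (sup_graph S1).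
Proof. intros Hinc n m v w [Hv _] [_ Hw] Hnm. exact (Hw v (Hinc n m v Hnm Hv)). Qed.

(* A maximum at some larger index bounds every earlier set. *)
Lemma sup_graph_Dom_infinite_bounded : increasing_family S2 ->
  infinite_nat (Dom (sup_graph S2)) -> forall n, exists B, forall x, S2 n x -> x <= B.
Proof.
  intros Hinc Hinf n. destruct (infinite_nat_ge _ Hinf n) as [m [Hm [w [_ Hw]]]].
  exists w. intros x Hx. exact (Hw x (Hinc n m x Hm Hx)).
Qed.

Lemma sup_graph_eventually_below :
  increasing_family S2 ->
  (forall n x, S1 n x -> exists y, S2 n y /\ x <= y) ->
  (exists N, forall n, N <= n -> exists x, S1 n x) ->
  infinite_nat (Dom (sup_graph S2)) -> eventually_below (sup_graph S1) (sup_graph S2).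
Proof.
  intros Hinc Hdom [N Hne] Hinf. exists N. intros n Hn.
  destruct (sup_graph_Dom_infinite_bounded Hinc Hinf n) as [B HB].
  destruct (Hne n Hn) as [x Hx]. destruct (Hdom n x Hx) as [y [Hy _]].
  split; [|split].
  - apply (is_max_exists _ B); [eauto|]. intros x' Hx'.
    destruct (Hdom n x' Hx') as [y' [Hy' Hle]]. specialize (HB y' Hy'). lia.
  - apply (is_max_exists _ B); eauto.
  - intros v w [Hv _] [_ Hw]. destruct (Hdom n v Hv) as [y' [Hy' Hle]].
    specialize (Hw y' Hy'). lia.
Qed.

End SupGraph.

Section UFamily.
Context {X : Type} (C : X -> Prop).

Definition total_on (R : X -> nat -> Prop) : Prop := forall T, C T -> exists m, R T m.

Definition le_on (R1 R2 : X -> nat -> Prop) : Prop :=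
  forall T x y, C T -> R1 T x -> R2 T y -> x <= y.

Definition U_family (P Q : X -> nat -> Prop) : nat -> nat -> Prop :=
  fun n m => exists T, C T /\ P T m /\ exists m', Q T m' /\ m' <= n.

Lemma U_family_increasing P Q : increasing_family (U_family P Q).
Proof.
  intros n m x Hnm [T [HT [HP [m' [HQ Hm']]]]]. exists T. repeat split; auto.
  exists m'. split; [assumption|lia].
Qed.

Lemma typ_le_U_family P1 Q1 P2 Q2 :
  total_on P1 -> total_on Q1 -> total_on P2 -> total_on Q2 -> le_on P1 P2 -> le_on Q2 Q1 ->
  typ_le (sup_graph (U_family P1 Q1)) (sup_graph (U_family P2 Q2)).
Proof.
  intros HP1 HQ1 HP2 HQ2 HP HQ.
  apply typ_le_of_eventually_below; [apply sup_graph_monotone, U_family_increasing|].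
  intros Hinf. apply sup_graph_eventually_below; [apply U_family_increasing| | |exact Hinf].
  - intros n x [T [HT [Hx [m' [Hm' Hn]]]]].
    destruct (HP2 T HT) as [y Hy]. destruct (HQ2 T HT) as [z Hz].
    exists y. split; [|exact (HP T x y HT Hx Hy)].
    exists T. repeat split; auto. exists z. split; [assumption|].
    specialize (HQ T z m' HT Hz Hm'). lia.
  - destruct (infinite_nat_ge _ Hinf 0) as [_ [_ [_ [[T [HT _]] _]]]].
    destruct (HP1 T HT) as [x Hx]. destruct (HQ1 T HT) as [z Hz].
    exists z. intros n Hn. exists x, T. repeat split; auto. exists z. auto.
Qed.

End UFamily.

Lemma Ufun_typ_le {F : Type} (k : nat) (Hk : 1 <= k) (C : table F -> Prop) (psi : list F -> nat)
  (HC : forall T, C T -> wf_table k T) (b1 c1 b2 c2 : mode) :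
  mode_rank b1 <= mode_rank b2 -> mode_rank c2 <= mode_rank c1 ->
  typ_le (Ufun k C psi b1 c1) (Ufun k C psi b2 c2).
Proof.
  intros Hb Hc.
  assert (Htot : forall b, total_on C (psi_val k psi b)).
  { intros b T HT. exact (psi_val_exists k Hk psi b T (HC T HT)). }
  apply (typ_le_U_family C); auto.
  - intros T x y HT. apply psi_val_le; auto.
  - intros T x y HT. apply psi_val_le; auto.
Qed.

Theorem lemma3 (F : Type) (HF : inhabited F) (k : nat) (Hk : 2 <= k)
  (C : table F -> Prop) (psi : list F -> nat) (HC : closed_class k C) :
  forall b : mode,
    (typ_le (Ufun k C psi b Mi) (Ufun k C psi b Md) /\
     typ_le (Ufun k C psi b Md) (Ufun k C psi b Ma)) /\
    (typ_le (Ufun k C psi Ma b) (Ufun k C psi Md b) /\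
     typ_le (Ufun k C psi Md b) (Ufun k C psi Mi b)).
Proof.
  intros b. destruct HC as [Hwf _].
  repeat split; apply Ufun_typ_le; simpl; auto; lia.
Qed.
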